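(* Let $n\ge 2$ and $k\in\{0,\dots,n-1\}$, and let $\vec m=(m_1,\dots,m_{n-1})^t\in\mathbb{Z}_{\ge0}^{n-1}$ satisfy $k+\sum_{i=1}^{n-1} i\,m_i\equiv 0 \pmod n$. Put $N=\sum_{i=1}^{n-1}m_i$ and define heights $h_1,\dots,h_N$ by: $h_1=\dots=h_{m_{n-1}}=n-1$, the next $m_{n-2}$ of them equal $n-2$, and so on, the last $m_1$ of them equal $1$ (i.e. the sequence is weakly decreasing and the value $i$ occurs exactly $m_i$ times). Put $h_0=n$ and $w_a=2n-h_{a-1}-h_a$ for $1\le a\le N$. Then the parent graph associated to $\vec m$, i.e. the Ferrers graph with interpolating matrix $\begin{pmatrix} w_1&\cdots&w_N\\ h_1&\cdots&h_N\end{pmatrix}$, has $$\sum_{a=1}^{N} h_a\,(w_1+w_2+\dots+w_a)=n\,\vec m^{\,t}C^{-1}\vec m$$ nodes, where $C$ is the Cartan matrix of $sl(n)$.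
   Context: $C$ is the $(n-1)\times(n-1)$ Cartan matrix of $sl(n)$, $C_{ij}=2\delta_{i,j}-\delta_{i,j-1}-\delta_{i,j+1}$, whose inverse is $(C^{-1})_{ij}=i(n-j)/n$ for $i\le j$ and $j(n-i)/n$ for $i>j$. The Ferrers graph with interpolating matrix $\begin{pmatrix} w_1&\cdots&w_N\\ h_1&\cdots&h_N\end{pmatrix}$ (positive integers) is the diagram whose profile, starting from $(0,-H)$ with $H=\sum h_a$, moves $w_1$ steps right, $h_1$ steps up, $w_2$ steps right, etc., ending at $(W,0)$ with $W=\sum w_a$; its number of nodes is $\sum_{a=1}^N h_a(w_1+\dots+w_a)$. *)

From mathcomp Require Import all_boot all_order all_algebra.
Set Implicit Arguments. Unset Strict Implicit. Unset Printing Implicit Defensive.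
Import GRing.Theory Num.Theory.

Definition cartan (n : nat) : 'M[rat]_(n.-1) :=
  \matrix_(i < n.-1, j < n.-1)
    ((2 * (i == j :> nat))%N%:R - (i.+1 == j :> nat)%N%:R - (j.+1 == i :> nat)%N%:R)%R.

(* The vector m = (m_1,...,m_{n-1}) is given as m : 'I_(n.-1) -> nat,
   with m_i = m (i-1) (0-based).  *)
Definition mvec (n : nat) (m : 'I_n.-1 -> nat) : 'rV[rat]_(n.-1) :=
  \row_i ((m i)%:R)%R.

Definition heights (n : nat) (m : 'I_n.-1 -> nat) : seq nat :=
  flatten [seq nseq (m j) j.+1 | j <- rev (enum 'I_n.-1)].

Definition hgt (n : nat) (m : 'I_n.-1 -> nat) (a : nat) : nat :=
  if a == 0 then n else nth 0 (heights m) a.-1.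

Definition wdt (n : nat) (m : 'I_n.-1 -> nat) (a : nat) : nat :=
  2 * n - hgt m a.-1 - hgt m a.

Definition ferrers_nodes (w h : nat -> nat) (N : nat) : nat :=
  \sum_(1 <= a < N.+1) h a * \sum_(1 <= b < a.+1) w b.

(* Since h_0 = n, the partial sums of widths telescope:
   w_1 + ... + w_a = (2a - 1) n - 2 (h_1 + ... + h_(a-1)) - h_a.  As the heights
   decrease, adding h_(N+1) raises sum_(a,b <= N) min(h_a, h_b) by (2N + 1) h_(N+1),
   and induction on N gives  #nodes = n sum_(a,b) min(h_a, h_b) - (sum_a h_a)^2.
   On the other side C^-1 has entries min(i, j) - ij/n, so
   n m^t C^-1 m = n sum_(i,j) m_i m_j min(i, j) - (sum_i i m_i)^2, which is the
   same expression with the heights grouped by value. *)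

From mathcomp Require Import all_boot all_order all_algebra.
From mathcomp Require Import zify ring.
Import GRing.Theory Num.Theory.
Local Open Scope ring_scope.

Definition parent_width (n : nat) (h : nat -> nat) (a : nat) : nat :=
  (2 * n - h a.-1 - h a)%N.

Definition height_sum (R : pzSemiRingType) (h : nat -> nat) (N : nat) : R :=
  \sum_(1 <= a < N.+1) (h a)%:R.

Definition pair_min_sum (R : pzSemiRingType) (h : nat -> nat) (N : nat) : R :=
  \sum_(1 <= a < N.+1) \sum_(1 <= b < N.+1) (minn (h a) (h b))%:R.

Lemma height_sumS (R : pzSemiRingType) h N :
  height_sum R h N.+1 = height_sum R h N + (h N.+1)%:R.
Proof. exact: big_nat_recr. Qed.

Section FerrersNodes.
Variables (R : comPzRingType) (n : nat) (h : nat -> nat).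
Hypotheses (h0 : h 0%N = n) (h_nonincr : {homo h : a b /~ (a <= b)%N}).

Lemma natr_parent_width a :
  (parent_width n h a)%:R = 2 * n%:R - (h a.-1)%:R - (h a)%:R :> R.
Proof.
have le_n b : (h b <= n)%N by rewrite -h0 h_nonincr.
rewrite /parent_width !natrB ?natrM //.
all: have := le_n a; have := le_n a.-1; lia.
Qed.

Lemma sum_parent_width a :
  \sum_(1 <= b < a.+2) (parent_width n h b)%:R
  = (2 * a%:R + 1) * n%:R - 2 * height_sum R h a - (h a.+1)%:R :> R.
Proof.
elim: a => [|a IH].
  by rewrite big_nat1 natr_parent_width /height_sum big_geq //= h0; ring.
rewrite big_nat_recr //= IH natr_parent_width height_sumS -pred_Sn.
by rewrite -[a.+1%:R]natr1; ring.
Qed.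

Lemma pair_min_sumS N :
  pair_min_sum R h N.+1 = pair_min_sum R h N + (2 * N%:R + 1) * (h N.+1)%:R.
Proof.
have min_last a : (a <= N.+1)%N -> minn (h a) (h N.+1) = h N.+1.
  by move=> le_a; apply/minn_idPr/h_nonincr.
rewrite /pair_min_sum big_nat_recr //= (eq_big_nat _ _ (m := 1) (n := N.+1)
  (F2 := fun a => \sum_(1 <= b < N.+1) (minn (h a) (h b))%:R + (h N.+1)%:R)).
- rewrite big_split (eq_big_nat _ _ (m := 1) (n := N.+2) (F2 := fun=> (h N.+1)%:R)).
    by rewrite !sumr_const_nat !subn1 /= mulrSr -[_ *+ N]mulr_natr; ring.
  by move=> b /andP[_ le_b]; rewrite minnC min_last.
- by move=> a /andP[_ /ltnW le_a]; rewrite big_nat_recr //= min_last.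
Qed.

Lemma ferrers_nodes_parent_width N :
  (ferrers_nodes (parent_width n h) h N)%:R
  = n%:R * pair_min_sum R h N - height_sum R h N ^+ 2 :> R.
Proof.
elim: N => [|N IH].
  by rewrite /ferrers_nodes /pair_min_sum /height_sum !big_geq //; ring.
rewrite /ferrers_nodes big_nat_recr //= natrD -/(ferrers_nodes _ _ N) IH.
rewrite natrM natr_sum sum_parent_width pair_min_sumS height_sumS.
ring.
Qed.

End FerrersNodes.

Lemma pairwise_flatten_nseq (I : eqType) (c f : I -> nat) (s : seq I) :
  pairwise (fun i j => f j <= f i)%N s ->
  pairwise geq (flatten [seq nseq (c i) (f i) | i <- s]).
Proof.
elim: s => //= i s IH /andP[/allP f_i_ge /IH pw_s].
rewrite pairwise_cat pw_s andbT; apply/andP; split.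
  apply/allrelP => _ _ /nseqP[-> _] /flattenP[_ /mapP[j j_s ->] /nseqP[-> _]].
  exact: f_i_ge.
elim: (c i) => //= k ->; rewrite all_nseq andbT; apply/orP; right; exact: leqnn.
Qed.

Section Heights.
Variables (n : nat) (m : 'I_n.-1 -> nat).

Lemma sum_heights (V : nmodType) (F : nat -> V) :
  \sum_(x <- heights m) F x = \sum_(j < n.-1) F j.+1 *+ m j.
Proof.
rewrite /heights big_flatten big_map big_rev big_enum /=.
by apply: eq_bigr => j _; rewrite big_nseq iter_addr_0.
Qed.

Lemma size_heights : size (heights m) = (\sum_(j < n.-1) m j)%N.
Proof. by rewrite -sum1_size sum_heights; under eq_bigr do rewrite natn. Qed.

Lemma heights_pairwise : pairwise geq (heights m).
Proof.
apply: pairwise_flatten_nseq.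
rewrite -sorted_pairwise ?rev_sorted; last by move=> ? ? ? /=; lia.
have : sorted leq (map val (enum 'I_n.-1)) by rewrite val_enum_ord iota_sorted.
by rewrite sorted_map.
Qed.

Lemma heights_lt x : x \in heights m -> (x < n)%N.
Proof. by move=> /flattenP[_ /mapP[j _ ->] /nseqP[-> _]]; have := ltn_ord j; lia. Qed.

Lemma hgt_nonincr : {homo hgt m : a b /~ (a <= b)%N}.
Proof.
have nth_le_n b : (nth 0 (heights m) b <= n)%N.
  case: (ltnP b (size (heights m))) => [/(mem_nth 0)/heights_lt/ltnW | ] //.
  by move/(nth_default 0)->.
case=> [|b] [|a] //= le_ab; rewrite /hgt /=; first exact: nth_le_n.
case: (ltnP b (size (heights m))) => [lt_b | /(nth_default 0)->] //.
move: le_ab; rewrite ltnS leq_eqVlt => /predU1P[-> // | lt_ab].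
have lt_a : (a < size (heights m))%N := ltn_trans lt_ab lt_b.
by move/(pairwiseP 0): heights_pairwise; apply.
Qed.

Lemma sum_hgt (V : nmodType) (F : nat -> V) :
  \sum_(1 <= a < (size (heights m)).+1) F (hgt m a) = \sum_(x <- heights m) F x.
Proof. by rewrite big_add1 /= [RHS](big_nth 0). Qed.

Lemma height_sum_hgt (R : comPzRingType) :
  height_sum R (hgt m) (size (heights m)) = \sum_(j < n.-1) (m j)%:R * j.+1%:R.
Proof.
rewrite /height_sum (sum_hgt _ (fun x => x%:R)) sum_heights.
by apply: eq_bigr => j _; rewrite mulr_natl.
Qed.

Lemma pair_min_sum_hgt (R : comPzRingType) :
  pair_min_sum R (hgt m) (size (heights m))
  = \sum_(i < n.-1) \sum_(j < n.-1) (m i)%:R * (m j)%:R * (minn i.+1 j.+1)%:R.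
Proof.
rewrite /pair_min_sum (sum_hgt _ (fun x => \sum_(1 <= b < _) (minn x (hgt m b))%:R)).
rewrite sum_heights; apply: eq_bigr => i _.
rewrite (sum_hgt _ (fun x => (minn i.+1 x)%:R)) sum_heights -sumrMnl.
by apply: eq_bigr => j _; rewrite -mulrA !mulr_natl.
Qed.

End Heights.

Lemma minn_second_difference a b :
  (minn a.+1 b).*2 = (minn a b + minn a.+2 b + (a.+1 == b))%N.
Proof. by case: eqP => [<- | ne_ab]; lia. Qed.

Lemma sum_ord_delta (R : pzSemiRingType) p c (F : nat -> R) :
  \sum_(k < p) (k == c :> nat)%:R * F k = if (c < p)%N then F c else 0.
Proof. by under eq_bigr do rewrite mulr_natl mulrb; rewrite -big_mkcond big_ord1_eq. Qed.

Definition cartan_inv (n : nat) : 'M[rat]_(n.-1) :=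
  \matrix_(i, j) ((minn i.+1 j.+1)%:R - (i.+1 * j.+1)%:R / n%:R).

Lemma mul_cartan_inv n : cartan n *m cartan_inv n = 1%:M.
Proof.
apply/matrixP => i j; rewrite !mxE.
have n_neq0 : n%:R != 0 :> rat by rewrite pnatr_eq0; have := ltn_ord i; lia.
(* [f a] is entry (a, j) of [cartan_inv n] in 1-based indices; it vanishes at
   a = 0 and a = n, which absorbs the boundary rows of the Cartan matrix. *)
pose f a : rat := (minn a j.+1)%:R - (a * j.+1)%:R / n%:R.
have f0 : f 0%N = 0 by rewrite /f min0n mul0n mul0r subrr.
have fn : f n = 0.
  rewrite /f natrM mulrAC divff // mul1r (minn_idPr _) ?subrr //.
  by have := ltn_ord j; lia.
have f_second_difference a : 2 * f a.+1 - f a.+2 - f a = (a.+1 == j.+1)%:R.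
  have /(congr1 (fun x => x%:R : rat)) := minn_second_difference a j.+1.
  rewrite -muln2 !natrD natrM => min_eq.
  have -> : (a.+1 == j.+1)%:R = (minn a.+1 j.+1)%:R * 2 - (minn a j.+1)%:R
                                 - (minn a.+2 j.+1)%:R :> rat.
    by rewrite min_eq; ring.
  by rewrite /f !natrM !mulrS; field.
have sum_shift c : (c < n.-1)%N ->
    \sum_(k < n.-1) (k.+1 == c :> nat)%:R * f k.+1 = f c.
  case: c => [_ | c lt_c]; first by rewrite f0 big1 // => k _; rewrite mul0r.
  under eq_bigr do rewrite eqSS.
  by rewrite (sum_ord_delta _ _ _ (fun k => f k.+1)) ifT //; lia.
rewrite (eq_bigr (fun k : 'I_n.-1 => 2 * ((k == i :> nat)%:R * f k.+1)
   - (k == i.+1 :> nat)%:R * f k.+1 - (k.+1 == i :> nat)%:R * f k.+1)); last first.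
  by move=> k _; rewrite !mxE natrM (eq_sym (i : nat)) (eq_sym i.+1) /f; ring.
rewrite !sumrB -mulr_sumr !(sum_ord_delta _ _ _ (fun k => f k.+1)).
rewrite ltn_ord sum_shift //.
have -> : (if (i.+1 < n.-1)%N then f i.+2 else 0) = f i.+2.
  by case: ltnP => // ge_i; have -> : i.+2 = n by have := ltn_ord i; lia.
by rewrite f_second_difference eqSS.
Qed.

Lemma invmx_cartan n : invmx (cartan n) = cartan_inv n.
Proof.
have [cartan_unit _] := mulmx1_unit (mul_cartan_inv n).
by rewrite -[LHS]mulmx1 -(mul_cartan_inv n) mulmxA mulVmx // mul1mx.
Qed.

Lemma cartan_inv_quad_form n (v : 'I_n.-1 -> rat) :
  n%:R * (\row_i v i *m cartan_inv n *m (\row_i v i)^T) 0 0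
  = n%:R * (\sum_i \sum_j v i * v j * (minn i.+1 j.+1)%:R)
    - (\sum_i v i * i.+1%:R) ^+ 2.
Proof.
case: n v => [|n] v; first by rewrite !big_ord0 !mul0r expr0n subr0.
rewrite expr2 mulr_suml !mulr_sumr -sumrB !mxE mulr_sumr.
under eq_bigr => j _ do rewrite !mxE mulr_suml mulr_sumr.
rewrite exchange_big; apply: eq_bigr => i _ /=.
rewrite !mulr_sumr -sumrB; apply: eq_bigr => j _.
by rewrite !mxE natrM; field; rewrite nat1r pnatr_eq0.
Qed.

Local Close Scope ring_scope.

Theorem lemma1 (n : nat) (k : 'I_n) (m : 'I_n.-1 -> nat)
  (hn : 2 <= n)
  (hcong : (k + \sum_(i < n.-1) i.+1 * m i = 0 %[mod n])%N) :
  let N := (\sum_(i < n.-1) m i)%N in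
  ((ferrers_nodes (wdt m) (hgt m) N)%:R : rat)
    = (n%:R * (mvec m *m invmx (cartan n) *m (mvec m)^T) ord0 ord0)%R.
Proof.
rewrite /= -size_heights (@ferrers_nodes_parent_width rat n (hgt m)) //.
  by rewrite invmx_cartan cartan_inv_quad_form pair_min_sum_hgt height_sum_hgt.
exact: hgt_nonincr.
Qed.
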